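(* Let $M,N\ge1$ be integers and let $f_0,\ldots,f_{K-1}$, $K\ge2$, be distinct functions $\mathbb{Z}_M\to\mathbb{Z}_N$. Let $\delta_{\min}$ be the minimum over all pairs $j\neq j'$ of the number of $x\in\mathbb{Z}_M$ with $f_j(x)\neq f_{j'}(x)$, and assume $\delta_{\min}<M$. If $C$ is a positive integer with $$C>\frac{\ln(K-1)}{\ln M-\ln(M-\delta_{\min})},$$ then the $C$-fold tensor powers $U_{f_0}^{\otimes C},\ldots,U_{f_{K-1}}^{\otimes C}$ of the standard oracle operators are unambiguously distinguishable.
   Context: For $f:\mathbb{Z}_M\to\mathbb{Z}_N$ the standard oracle operator is the unitary $U_f$ on $\mathcal{H}_M\otimes\mathcal{H}_N$ (with orthonormal bases $\{|x\rangle\}_{x\in\mathbb{Z}_M}$, $\{|y\rangle\}_{y\in\mathbb{Z}_N}$) given by $U_f|x\rangle\otimes|y\rangle=|x\rangle\otimes|y\oplus f(x)\rangle$, $\oplus$ being addition mod $N$; $U_f^{\otimes C}$ acts on $(\mathcal{H}_M\otimes\mathcal{H}_N)^{\otimes C}$ (parallel calls on separate registers). A finite list of unitary operators $W_1,\ldots,W_K$ on a finite-dimensional Hilbert space $\mathcal{H}$ is called unambiguously distinguishable if there exist a finite-dimensional ancilla space $\mathcal{H}_A$ and a unit vector $|\psi\rangle\in\mathcal{H}\otimes\mathcal{H}_A$ such that the vectors $(W_j\otimes\mathbb{1}_A)|\psi\rangle$ are linearly independent. *)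

From HB Require Import structures.
From mathcomp Require Import all_boot all_order all_algebra.
From Stdlib Require Import Reals.
Set Implicit Arguments. Unset Strict Implicit. Unset Printing Implicit Defensive.
Import Order.TTheory GRing.Theory Num.Theory.
Local Open Scope ring_scope.

(* Operators on a finite-dimensional Hilbert space with orthonormal basis
   indexed by a finite type I, given by their matrix elements
   W i j = <i| W |j>; vectors are coefficient functions I -> Cx. *)
Section Ops.
Variable Cx : numClosedFieldType.

Definition apply_op (I : finType) (W : I -> I -> Cx) (v : I -> Cx) : I -> Cx :=
  fun i => \sum_(j : I) W i j * v j.

Definition tens_pow (I : finType) (C : nat) (W : I -> I -> Cx) :
  {ffun 'I_C -> I} -> {ffun 'I_C -> I} -> Cx :=
  fun xs ys => \prod_(c < C) W (xs c) (ys c).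

Definition tens_id (I : finType) (d : nat) (W : I -> I -> Cx) :
  (I * 'I_d)%type -> (I * 'I_d)%type -> Cx :=
  fun p q => W p.1 q.1 * (p.2 == q.2)%:R.

Definition unit_vec (I : finType) (v : I -> Cx) : Prop :=
  \sum_(i : I) `|v i| ^+ 2 = 1.

Definition lin_indep (I : finType) (K : nat) (v : 'I_K -> I -> Cx) : Prop :=
  forall c : 'I_K -> Cx,
    (forall i : I, \sum_(k < K) c k * v k i = 0) -> forall k, c k = 0.

Definition unamb_dist (I : finType) (K : nat) (W : 'I_K -> I -> I -> Cx) : Prop :=
  exists d : nat, exists psi : (I * 'I_d)%type -> Cx,
    unit_vec psi /\ lin_indep (fun k => apply_op (@tens_id I d (W k)) psi).
End Ops.

Lemma ord_pos N (y : 'I_N) : leq 1 N.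
Proof. exact: leq_ltn_trans (leq0n y) (ltn_ord y). Qed.

Definition addI N (y z : 'I_N) : 'I_N := Ordinal (ltn_pmod (y + z) (ord_pos y)).

(* standard oracle U_f |x> (x) |y> = |x> (x) |y (+) f x>, basis of
   H_M (x) H_N indexed by 'I_M * 'I_N *)
Definition oracle (Cx : numClosedFieldType) M N (f : 'I_M -> 'I_N) :
  ('I_M * 'I_N)%type -> ('I_M * 'I_N)%type -> Cx :=
  fun p q => ((p.1 == q.1) && (p.2 == addI q.2 (f q.1)))%:R.

Definition hdist M N (f g : 'I_M -> 'I_N) : nat := #|[pred x | f x != g x]|.

(* minimum over pairs j <> j' of hdist (f j) (f j'); the default M is never
   smaller than an actual value, so for K >= 2 this is the true minimum *)
Definition delta_min M N K (f : 'I_K -> 'I_M -> 'I_N) : nat :=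
  \big[minn/M]_(j < K) \big[minn/M]_(j' < K | j != j') hdist (f j) (f j').

(* With the input state (1/sqrt D) sum_t |t>|t>, the vector (W (x) 1)|psi> lists
   the matrix entries of W, so linearly independent matrices are unambiguously
   distinguishable.  The entry of U_f^{(x)C} at output (x, g o x), input (x, 0)
   is 1 exactly when f and g agree on every component of the tuple x.  For a
   fixed k0 and each of the K - 1 indices k <> k0, at most (M - delta)^C tuples
   make f_k agree with f_k0; the bound on C says (K - 1)(M - delta)^C < M^C, so
   some tuple separates f_k0 from all the others, and evaluating a vanishing
   linear combination there kills its k0-th coefficient. *)

From HB Require Import structures.
From mathcomp Require Import all_boot all_order all_algebra.
From Stdlib Require Import Reals Lra FunctionalExtensionality.
Set Implicit Arguments. Unset Strict Implicit. Unset Printing Implicit Defensive.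
Import Order.TTheory GRing.Theory Num.Theory.
(* Requiring Reals after ssrnat rebinds [^] in nat_scope to [Nat.pow]. *)
Import ssrnat.
Local Open Scope ring_scope.

Lemma leq_card_bigcup (I T : finType) (P : pred I) (A : I -> {set T}) :
  (#|\bigcup_(i | P i) A i| <= \sum_(i | P i) #|A i|)%N.
Proof.
apply: (big_ind2 (fun (X : {set T}) n => #|X| <= n)%N) => [|X m Y n leXm leYn|//].
  by rewrite cards0.
by apply: leq_trans (leq_card_setU X Y) _; apply: leq_add.
Qed.

Lemma natr_forall (R : comPzSemiRingType) (I : finType) (P : pred I) :
  \prod_i ((P i)%:R : R) = ([forall i, P i])%:R.
Proof.
case: (boolP [forall i, P i]) => [/forallP allP | /forallPn [i notPi]].
  by rewrite big1 // => i _; rewrite allP.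
by rewrite (bigD1 i) //= (negbTE notPi) mul0r.
Qed.

Section MaxEntangled.
Variables (Cx : numClosedFieldType) (I : finType).

Definition max_entangled : I * 'I_#|I| -> Cx :=
  fun q => (sqrtC #|I|%:R)^-1 * (enum_rank q.1 == q.2)%:R.

Lemma unit_vec_max_entangled : (0 < #|I|)%N -> unit_vec max_entangled.
Proof.
move=> I_gt0; rewrite /unit_vec -(pair_bigA _ (fun i a => `|max_entangled (i, a)| ^+ 2)) /=.
rewrite (eq_bigr (fun _ => `|(sqrtC #|I|%:R)^-1| ^+ 2)); last first.
  move=> i _; rewrite (bigD1 (enum_rank i)) //= /max_entangled eqxx mulr1.
  by rewrite big1 ?addr0 // => a ne_a; rewrite eq_sym (negbTE ne_a) mulr0 normr0 exprS mul0r.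
rewrite sumr_const normfV ger0_norm ?sqrtC_ge0 ?ler0n // exprVn sqrtCK.
by rewrite -[X in X *+ _]mulr1 -mulrnAr mulVf // pnatr_eq0 -lt0n.
Qed.

Lemma apply_tens_id_max_entangled (W : I -> I -> Cx) i a :
  apply_op (tens_id W) max_entangled (i, a) = (sqrtC #|I|%:R)^-1 * W i (enum_val a).
Proof.
rewrite /apply_op /tens_id /max_entangled (bigD1 (enum_val a, a)) //= big1 ?addr0.
  by rewrite enum_valK /= !eqxx !mulr1 mulrC.
move=> [j b] /= ne; have [eq_ab|_] := eqVneq a b; last by rewrite mulr0 mul0r.
subst b; have -> : (enum_rank j == a) = false.
  by apply: contraNF ne => /eqP <-; rewrite enum_rankK.
by rewrite !mulr0.
Qed.

Lemma unamb_dist_lin_indep (K : nat) (W : 'I_K -> I -> I -> Cx) :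
  (0 < #|I|)%N -> lin_indep (fun k (p : I * I) => W k p.1 p.2) -> unamb_dist W.
Proof.
move=> I_gt0 indepW; exists #|I|, max_entangled.
split; first exact: unit_vec_max_entangled.
move=> c comb_eq0; apply: indepW => -[i j] /=.
have /= := comb_eq0 (i, enum_rank j).
under eq_bigr do rewrite apply_tens_id_max_entangled enum_rankK mulrCA.
have norm_neq0 : (sqrtC #|I|%:R)^-1 != 0 :> Cx.
  by rewrite invr_eq0 sqrtC_eq0 pnatr_eq0 -lt0n.
by rewrite -mulr_sumr => /eqP; rewrite mulf_eq0 (negbTE norm_neq0) => /eqP.
Qed.

End MaxEntangled.

Definition agree_tuples (A B : finType) (C : nat) (f g : A -> B) : {set {ffun 'I_C -> A}} :=
  [set x : {ffun 'I_C -> A} | [forall i, f (x i) == g (x i)]].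

Lemma card_agree_tuples (A B : finType) (C : nat) (f g : A -> B) :
  #|agree_tuples C f g| = (#|[pred y | f y == g y]| ^ C)%N.
Proof.
rewrite -[C in RHS]card_ord -card_ffun_on; apply: eq_card => x.
by rewrite !inE; apply/forallP/ffun_onP.
Qed.

Lemma card_eq_hdist M N (f g : 'I_M -> 'I_N) :
  #|[pred y | f y == g y]| = (M - hdist f g)%N.
Proof.
have -> : hdist f g = #|[predC [pred y | f y == g y]]|.
  by apply: eq_card => y; rewrite !inE.
by apply: (canRL (addnK _)); rewrite cardC card_ord.
Qed.

Lemma exists_separating_tuple M N K (f : 'I_K -> 'I_M -> 'I_N) (C d : nat) (k0 : 'I_K) :
  (forall k, k != k0 -> d <= hdist (f k) (f k0))%N ->
  (K.-1 * (M - d) ^ C < M ^ C)%N ->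
  exists x, forall k, k != k0 -> x \notin agree_tuples C (f k) (f k0).
Proof.
move=> dist_ge lt_count.
pose separating x := [forall k, (k != k0) ==> (x \notin agree_tuples C (f k) (f k0))].
have [x /forallP sep_x | not_sep] := pickP separating.
  by exists x => k ne_k; apply: (implyP (sep_x k)).
suff : (M ^ C <= K.-1 * (M - d) ^ C)%N by rewrite leqNgt lt_count.
have cover : [set: {ffun 'I_C -> 'I_M}] \subset
             \bigcup_(k | k != k0) agree_tuples C (f k) (f k0).
  apply/subsetP => x _; apply/bigcupP.
  have /forallPn [k] := negbT (not_sep x).
  by rewrite negb_imply negbK => /andP [ne_k x_agree]; exists k.
have <- : #|[set: {ffun 'I_C -> 'I_M}]| = (M ^ C)%N by rewrite cardsT card_ffun !card_ord.
apply: leq_trans (subset_leq_card cover) _.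
apply: leq_trans (leq_card_bigcup _ _) _.
have <- : #|[pred k | k != k0]| = K.-1 by rewrite cardC1 card_ord.
rewrite -sum_nat_const.
apply: leq_sum => k ne_k; rewrite card_agree_tuples card_eq_hdist.
have le_agree := leq_sub2l M (dist_ge k ne_k).
by have [->|C_gt0] := posnP C; rewrite ?expn0 ?leq_exp2r.
Qed.

Section OracleTensorPowers.
Variables (Cx : numClosedFieldType) (M N C : nat).

Lemma add0I (z0 y : 'I_N) : z0 = 0%N :> nat -> addI z0 y = y.
Proof. by move=> z0_eq0; apply: val_inj; rewrite /= z0_eq0 add0n modn_small. Qed.

Lemma tens_pow_oracle_agree (f g : 'I_M -> 'I_N) (x : {ffun 'I_C -> 'I_M}) (z0 : 'I_N) :
  z0 = 0%N :> nat ->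
  tens_pow (@oracle Cx M N f) [ffun i => (x i, g (x i))] [ffun i => (x i, z0)]
    = (x \in agree_tuples C f g)%:R :> Cx.
Proof.
move=> z0_eq0; rewrite /tens_pow inE -natr_forall.
by apply: eq_bigr => i _; rewrite /oracle !ffunE /= eqxx add0I // eq_sym.
Qed.

Lemma lin_indep_oracle_pow K (f : 'I_K -> 'I_M -> 'I_N) :
  (0 < N)%N ->
  (forall k0, exists x, forall k, k != k0 -> x \notin agree_tuples C (f k) (f k0)) ->
  lin_indep (fun k (p : {ffun 'I_C -> 'I_M * 'I_N} * {ffun 'I_C -> 'I_M * 'I_N}) =>
               tens_pow (@oracle Cx M N (f k)) p.1 p.2).
Proof.
move=> N_gt0 separating c comb_eq0 k0; have [x sep_x] := separating k0.
have := comb_eq0 ([ffun i => (x i, f k0 (x i))], [ffun i => (x i, Ordinal N_gt0)]).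
rewrite (bigD1 k0) //= big1 ?addr0 => [|k ne_k].
  have x_agree : x \in agree_tuples C (f k0) (f k0) by rewrite inE; apply/forallP.
  by rewrite tens_pow_oracle_agree // x_agree mulr1.
by rewrite /= tens_pow_oracle_agree // (negbTE (sep_x k ne_k)) mulr0.
Qed.

End OracleTensorPowers.

Lemma INR_expn (m n : nat) : INR (m ^ n) = (INR m ^ n)%R.
Proof. by elim: n => [|n IHn]; rewrite ?expn0 // expnS mulnE mult_INR IHn. Qed.

Lemma mul_expn_lt_of_ln_bound (a r m C : nat) :
  (0 < a)%N -> (0 < r < m)%N ->
  (INR C > ln (INR a) / (ln (INR m) - ln (INR r)))%R ->
  (a * r ^ C < m ^ C)%N.
Proof.
move=> a_gt0 /andP [r_gt0 lt_rm] C_gt.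
have a_pos : (0 < INR a)%R by apply/lt_0_INR/ltP.
have r_pos : (0 < INR r)%R by apply/lt_0_INR/ltP.
have m_pos : (0 < INR m)%R by apply/lt_0_INR/ltP; apply: ltn_trans lt_rm.
have ln_gap : (0 < ln (INR m) - ln (INR r))%R.
  have ln_mono := ln_increasing _ _ r_pos (lt_INR _ _ (ltP lt_rm)); lra.
have ln_lt : (ln (INR a) < INR C * (ln (INR m) - ln (INR r)))%R.
  have := Rmult_lt_compat_r _ _ _ ln_gap C_gt.
  by rewrite -Rmult_div_swap Rmult_div_l //; apply: Rgt_not_eq.
apply/ltP/INR_lt; rewrite mulnE mult_INR !INR_expn.
apply: ln_lt_inv; [exact/Rmult_lt_0_compat/pow_lt | exact: pow_lt |].
by rewrite ln_mult ?ln_pow //; [lra | exact: pow_lt].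
Qed.

Lemma hdist_gt0 M N (f g : 'I_M -> 'I_N) : f <> g -> (0 < hdist f g)%N.
Proof.
move=> ne_fg; rewrite lt0n; apply: contra_notN ne_fg => /eqP/card0_eq no_diff.
by apply: functional_extensionality => x; have := no_diff x; rewrite !inE => /negbFE/eqP.
Qed.

(* [M] is not neutral for [minn], so [delta_min] is only a semigroup big operator. *)
HB.instance Definition _ := SemiGroup.isComLaw.Build nat minn minnA minnC.

Section DeltaMin.
Variables (M N K : nat) (f : 'I_K -> 'I_M -> 'I_N).

Lemma delta_min_le_hdist j j' : j != j' -> (delta_min f <= hdist (f j) (f j'))%N.
Proof.
move=> ne_jj'; rewrite /delta_min (bigD1 j) //=; apply: leq_trans (geq_minl _ _) _.
by rewrite (bigD1 j') //=; apply: geq_minl.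
Qed.

Lemma delta_min_gt0 :
  (0 < M)%N -> (forall j j', j <> j' -> f j <> f j') -> (0 < delta_min f)%N.
Proof.
move=> M_gt0 f_inj; have min_gt0 m n : (0 < m -> 0 < n -> 0 < minn m n)%N.
  by rewrite leq_min => -> ->.
apply: (big_ind (fun n => 0 < n)%N) => // j _.
apply: (big_ind (fun n => 0 < n)%N) => // j' ne_jj'.
by apply/hdist_gt0/f_inj/eqP.
Qed.

End DeltaMin.

Theorem mainTheorem12 (Cx : numClosedFieldType) (M N K : nat)
  (f : 'I_K -> 'I_M -> 'I_N) (C : nat) :
  leq 1 M -> leq 1 N -> leq 2 K ->
  (forall j j' : 'I_K, j <> j' -> f j <> f j') ->
  leq (delta_min f).+1 M ->
  leq 1 C ->
  (INR C > ln (INR (K - 1)) / (ln (INR M) - ln (INR (M - delta_min f))))%R ->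
  unamb_dist (fun k : 'I_K => @tens_pow Cx _ C (@oracle Cx M N (f k))).
Proof.
move=> M_gt0 N_gt0 K_ge2 f_inj delta_lt_M _ C_gt.
have delta_gt0 := delta_min_gt0 M_gt0 f_inj.
have count_lt : (K.-1 * (M - delta_min f) ^ C < M ^ C)%N.
  rewrite -subn1; apply: mul_expn_lt_of_ln_bound C_gt; first by rewrite subn_gt0.
  by rewrite subn_gt0 delta_lt_M ltn_subrL delta_gt0.
apply: unamb_dist_lin_indep.
  by apply/card_gt0P; exists ([ffun=> (Ordinal M_gt0, Ordinal N_gt0)]).
apply: lin_indep_oracle_pow N_gt0 _ => k0.
by apply: exists_separating_tuple count_lt => k ne_k; apply: delta_min_le_hdist.
Qed.
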